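(* There is an absolute constant $c>0$ such that the following holds. Let $(V,E^+\uplus E^-)$ be a Correlation Clustering instance with optimum cost $\mathrm{opt}$, let $\mathcal C$ be a clustering of $V$ with $\mathrm{obj}(\mathcal C)\le3\,\mathrm{opt}$, and let $\mathcal K$ be the partition of $V$ constructed from $\mathcal C$ as described in the context (with $\beta=0.1$). Then $\mathrm{obj}(\mathcal K)\le c\cdot\mathrm{opt}$, where $\mathcal K$ is viewed as a clustering.
   Context: A Correlation Clustering instance consists of a finite vertex set $V$ and a partition $E^+\uplus E^-=\binom V2$ of unordered pairs of distinct vertices into $+$edges and $-$edges. For a clustering (partition) $\mathcal C$ of $V$, $\mathrm{obj}(\mathcal C)$ is the number of $+$edges between different parts plus the number of $-$edges inside parts; $\mathrm{opt}$ is its minimum. By convention every vertex has a $+$ self-loop, so the set $N^+_u$ of $+$neighbours of $u$ contains $u$ (self-loops never contribute to cost). $A\triangle B$ denotes symmetric difference. Construction of $\mathcal K$ with $\beta=0.1$: for every non-singleton $C\in\mathcal C$, mark every $u\in C$ with $|N^+_u\triangle C|>\frac\beta2|C|$, and then, if at least $\frac{\beta|C|}{3}$ vertices of $C$ are marked, mark all vertices of $C$. $\mathcal K$ is obtained from $\mathcal C$ by removing every marked vertex from its cluster and making it a singleton cluster. The parts of $\mathcal K$ are called atoms. *)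

From mathcomp Require Import all_boot.
Set Implicit Arguments. Unset Strict Implicit. Unset Printing Implicit Defensive.

Section CC.
Variable V : finType.
(* A Correlation Clustering instance on V: [pos u v] means {u,v} is a +edge;
   every other pair of distinct vertices is a -edge. [pos] is assumed symmetric
   in the theorem. *)
Variable pos : rel V.

Definition disagree (P : {set {set V}}) (u v : V) : bool :=
  (u != v) && (if pos u v then pblock P u != pblock P v
               else pblock P u == pblock P v).

(* obj counts unordered pairs: the ordered count is exactly twice it (pos symmetric) *)
Definition obj (P : {set {set V}}) : nat :=
  #|[set p : V * V | disagree P p.1 p.2]| %/ 2.

Definition singletons : {set {set V}} := [set [set x] | x in V].

Definition opt : nat :=
  \big[minn/obj singletons]_(P : {set {set V}} | partition P [set: V]) obj P.

Definition Nplus (u : V) : {set V} := [set v | (v == u) || pos u v].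

Definition symdiff (A B : {set V}) : {set V} := (A :\: B) :|: (B :\: A).

(* beta = 1/10: |N^+_u (sym.diff.) C| > (beta/2)|C|  <=>  20 |..| > |C| *)
Definition bad (C : {set V}) (u : V) : bool :=
  20 * #|symdiff (Nplus u) C| > #|C|.

(* marking inside a non-singleton cluster C;
   at least beta|C|/3 marked  <=>  30 * #marked >= |C| *)
Definition marked (P : {set {set V}}) (u : V) : bool :=
  [exists C in P, [&& u \in C, 1 < #|C| &
     bad C u || (#|C| <= 30 * #|[set w in C | bad C w]|)]].

Definition Mset (P : {set {set V}}) : {set V} := [set u | marked P u].

Definition Kof (P : {set {set V}}) : {set {set V}} :=
  ([set C :\: Mset P | C in P] :\ set0) :|: [set [set u] | u in Mset P].

End CC.

From mathcomp Require Import all_boot zify.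
Set Implicit Arguments. Unset Strict Implicit. Unset Printing Implicit Defensive.

(* Disagreements are counted as ordered pairs, of which there are 2 obj.  A
   pair that disagrees in K but not in C has a marked endpoint u whose
   C-cluster A contains the other endpoint, so K pays at most |A| extra per
   marked vertex of A.  A bad vertex u of A has |A| <= 20 |N^+_u Δ A|, and
   N^+_u Δ A consists of disagreements of C at u.  If all of A was marked
   then at least |A|/30 of its vertices are bad, which pays for |A|^2;
   otherwise every marked vertex of A is bad and pays for itself.  Hence
   obj K <= 1201 obj C <= 3603 opt. *)

Section OrderedPairs.
Variable T : finType.

Lemma card_pairs (r : rel T) :
  #|[set p : T * T | r p.1 p.2]| = \sum_u #|[set v | r u v]|.
Proof.
rewrite -sum1_card (eq_bigl (fun p : T * T => predT p.1 && r p.1 p.2)) => [|p].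
  rewrite -(pair_big_dep predT r (fun _ _ => 1)) /=.
  by apply: eq_bigr => u _; rewrite sum1_card; apply: eq_card => v; rewrite inE.
by rewrite inE.
Qed.

Lemma card_pairs_swap (r : rel T) :
  #|[set p : T * T | r p.2 p.1]| = #|[set p : T * T | r p.1 p.2]|.
Proof.
have swapK : involutive (fun p : T * T => (p.2, p.1)) by case.
rewrite -(card_imset _ (inv_inj swapK)); apply: eq_card => p.
by rewrite -[p in LHS]swapK mem_imset ?inE //; apply: inv_inj.
Qed.

Lemma card_pairs_sym_irrefl (r : rel T) : symmetric r -> irreflexive r ->
  #|[set p : T * T | r p.1 p.2]|
    = 2 * #|[set p : T * T | r p.1 p.2 && (enum_rank p.1 < enum_rank p.2)]|.
Proof.
move=> r_sym r_irr.
set L := [set p : T * T | _ && _].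
set R := [set p : T * T | r p.2 p.1 && (enum_rank p.2 < enum_rank p.1)].
have -> : [set p : T * T | r p.1 p.2] = L :|: R.
  apply/setP => [[a b]]; rewrite !inE /= [r b a]r_sym -andb_orr.
  case rab: (r a b) => //=; apply/esym; rewrite -neq_ltn.
  by apply: contraFN (r_irr a) => /eqP/val_inj/enum_rank_inj ab; rewrite {2}ab.
have LR0 : L :&: R = set0.
  by apply/setP => [[a b]]; rewrite !inE /=; case: ltngtP; rewrite ?andbF.
have RL : #|R| = #|L|.
  exact: (card_pairs_swap (fun a b => r a b && (enum_rank a < enum_rank b))).
by rewrite cardsU LR0 cards0 RL; lia.
Qed.

End OrderedPairs.

Section Disagreements.
Variable V : finType.
Variable pos : rel V.
Hypothesis pos_sym : symmetric pos.

Definition disagreements (P : {set {set V}}) := [set p : V * V | disagree pos P p.1 p.2].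

Definition disagree_deg (P : {set {set V}}) (u : V) := #|[set v | disagree pos P u v]|.

Lemma disagree_sym P : symmetric (disagree pos P).
Proof. by move=> u v; rewrite /disagree eq_sym pos_sym [pblock P v == _]eq_sym. Qed.

Lemma card_disagreements P : #|disagreements P| = 2 * obj pos P.
Proof.
rewrite /obj -/(disagreements P) /disagreements card_pairs_sym_irrefl.
- by rewrite mulKn.
- exact: disagree_sym.
- by move=> u; rewrite /disagree eqxx.
Qed.

Variable P : {set {set V}}.
Hypothesis P_part : partition P [set: V].

Let P_cover : cover P = [set: V]. Proof. by case/and3P: P_part => /eqP. Qed.
Let P_triv : trivIset P. Proof. by case/and3P: P_part. Qed.
Let mem_pblockP u : u \in pblock P u. Proof. by rewrite mem_pblock P_cover inE. Qed.
Let pblockP u : pblock P u \in P. Proof. by apply: pblock_mem; rewrite P_cover inE. Qed.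

Lemma sum_over_blocks (F : V -> nat) :
  \sum_u F u = \sum_(A in P) \sum_(u in A) F u.
Proof.
rewrite -(big_trivIset _ P_triv) P_cover.
by apply: eq_bigl => u; rewrite inE.
Qed.

Local Notation M := (Mset pos P).
Local Notation K := (Kof pos P).

Definition bad_part (A : {set V}) := [set w in A | bad pos A w].

Lemma marked_pblock u : u \in M ->
  bad pos (pblock P u) u || (#|pblock P u| <= 30 * #|bad_part (pblock P u)|).
Proof.
rewrite inE => /existsP [A] /and4P [AP uA _].
by rewrite (def_pblock P_triv AP uA).
Qed.

Definition atom x := if x \in M then [set x] else pblock P x :\: M.

Lemma mem_atom x : x \in atom x.
Proof. by rewrite /atom; case: ifP => xM; rewrite ?set11 // in_setD xM mem_pblockP. Qed.

Lemma atom_Kof x : atom x \in K.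
Proof.
rewrite /Kof /atom in_setU in_setD1; case: ifP => xM.
  by rewrite (imset_f (fun u => [set u])) ?orbT.
rewrite (imset_f (fun A => A :\: M) (pblockP x)) andbT; apply/orP; left.
apply: contraFN xM => /eqP/setP/(_ x).
by rewrite in_setD mem_pblockP andbT !inE => /negbFE.
Qed.

Lemma Kof_atom A x : A \in K -> x \in A -> A = atom x.
Proof.
rewrite /atom in_setU in_setD1 => /orP [/andP [_ /imsetP [B BP ->]] | /imsetP [u uM ->]].
  by rewrite in_setD => /andP [/negbTE -> xB]; rewrite (def_pblock P_triv BP xB).
by rewrite in_set1 => /eqP ->; rewrite uM.
Qed.

Lemma pblock_Kof x : pblock K x = atom x.
Proof.
apply: def_pblock (atom_Kof x) (mem_atom x).
apply/trivIsetP => A B AK BK; apply: contraR => /pred0Pn [y /andP [yA yB]].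
by rewrite (Kof_atom AK yA) (Kof_atom BK yB).
Qed.

Lemma atom_sub_pblock x : atom x \subset pblock P x.
Proof. by rewrite /atom; case: ifP => _; rewrite ?sub1set ?subsetDl. Qed.

Lemma pblock_Kof_eq u v : pblock K u = pblock K v -> pblock P u = pblock P v.
Proof.
rewrite !pblock_Kof => Kuv; apply: same_pblock => //.
by rewrite (subsetP (atom_sub_pblock v)) // -Kuv mem_atom.
Qed.

Lemma pblock_Kof_unmarked u v : u \notin M -> v \notin M ->
  pblock P u = pblock P v -> pblock K u = pblock K v.
Proof. by rewrite !pblock_Kof /atom => /negbTE -> /negbTE -> ->. Qed.

Definition marked_pair u v := (u \in M) && (v \in pblock P u).

Lemma eq_pblock_Kof u v : ~~ marked_pair u v -> ~~ marked_pair v u ->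
  (pblock K u == pblock K v) = (pblock P u == pblock P v).
Proof.
move=> nuv nvu; apply/eqP/eqP => [/pblock_Kof_eq // | eqP].
apply: pblock_Kof_unmarked => //.
  by apply: contra nuv => uM; rewrite /marked_pair uM eqP mem_pblockP.
by apply: contra nvu => vM; rewrite /marked_pair vM -eqP mem_pblockP.
Qed.

Lemma disagree_Kof u v : disagree pos K u v ->
  [|| disagree pos P u v, marked_pair u v | marked_pair v u].
Proof.
move=> dK; apply/norP => [[dP /norP [nuv nvu]]]; move: dK dP.
by rewrite /disagree eq_pblock_Kof // => ->.
Qed.

Lemma card_disagreements_Kof :
  #|disagreements K| <= #|disagreements P| + 2 * #|[set p : V * V | marked_pair p.1 p.2]|.
Proof.
set E := [set p : V * V | _]; set E' := [set p : V * V | marked_pair p.2 p.1].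
have sub : disagreements K \subset disagreements P :|: E :|: E'.
  by apply/subsetP => p; rewrite !inE -orbA => /disagree_Kof.
have := (leq_card_setU (disagreements P :|: E) E').1.
have := (leq_card_setU (disagreements P) E).1.
have := subset_leq_card sub; have : #|E'| = #|E| by apply: card_pairs_swap.
lia.
Qed.

Lemma card_marked_pairs :
  #|[set p : V * V | marked_pair p.1 p.2]| = \sum_(A in P) #|A :&: M| * #|A|.
Proof.
rewrite card_pairs sum_over_blocks; apply: eq_bigr => A AP.
rewrite (big_setID M) /= -sum_nat_const [X in _ + X]big1 ?addn0 => [|u].
  apply: eq_bigr => u /setIP [uA uM].
  by apply: eq_card => v; rewrite inE /marked_pair uM (def_pblock P_triv AP uA).
by move=> /setDP [_ uM]; apply: eq_card0 => v; rewrite inE /marked_pair (negbTE uM).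
Qed.

Lemma symdiff_pblock_sub x :
  symdiff (Nplus pos x) (pblock P x) \subset [set v | disagree pos P x v].
Proof.
apply/subsetP => v; rewrite /symdiff /Nplus /disagree !inE.
case: (eqVneq v x) => [-> | vx] /=; first by rewrite mem_pblockP.
case: (pos x v) => /=; rewrite ?andbT ?andbF ?orbF.
  by apply: contraNneq => ->.
by move/(same_pblock P_triv) => ->.
Qed.

Lemma bad_pblock x : bad pos (pblock P x) x -> #|pblock P x| <= 20 * disagree_deg P x.
Proof.
rewrite /bad => /ltnW; move/subset_leq_card: (symdiff_pblock_sub x).
rewrite -/(disagree_deg P x); lia.
Qed.

Lemma card_bad_part A : A \in P ->
  #|bad_part A| * #|A| <= 20 * \sum_(u in A) disagree_deg P u.
Proof.
move=> AP; rewrite -sum_nat_const big_distrr /=.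
apply: (@leq_trans (\sum_(u in bad_part A) 20 * disagree_deg P u)).
  apply: leq_sum => u; rewrite inE => /andP [uA].
  by rewrite -(def_pblock P_triv AP uA); apply: bad_pblock.
by apply: (sub_le_big leqnn (fun m n => leq_addr n m)) => u; rewrite inE => /andP [].
Qed.

Lemma card_marked_block A : A \in P ->
  #|A :&: M| * #|A| <= 600 * \sum_(u in A) disagree_deg P u.
Proof.
move=> AP; have bad_le := card_bad_part AP.
case: (leqP #|A| (30 * #|bad_part A|)) => [heavy | light].
  have AM_le : #|A :&: M| <= #|A| by apply/subset_leq_card/subsetIl.
  have := leq_mul AM_le (leqnn #|A|); have := leq_mul heavy (leqnn #|A|); nia.
have AM_bad : A :&: M \subset bad_part A.
  apply/subsetP => u /setIP [uA /marked_pblock].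
  by rewrite (def_pblock P_triv AP uA) leqNgt light orbF inE uA.
have := leq_mul (subset_leq_card AM_bad) (leqnn #|A|); nia.
Qed.

Lemma card_disagreements_Kof_le : #|disagreements K| <= 1201 * #|disagreements P|.
Proof.
have := card_disagreements_Kof; rewrite card_marked_pairs.
have : \sum_(A in P) #|A :&: M| * #|A| <= 600 * #|disagreements P|.
  rewrite card_pairs sum_over_blocks big_distrr.
  by apply: leq_sum => A; apply: card_marked_block.
lia.
Qed.

End Disagreements.

Theorem lemma6 :
  exists c : nat, 0 < c /\
  forall (V : finType) (pos : rel V), symmetric pos ->
  forall C : {set {set V}}, partition C [set: V] ->
  obj pos C <= 3 * opt pos ->
  obj pos (Kof pos C) <= c * opt pos.
Proof.
exists 3603; split => // V pos pos_sym C C_part obj_le.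
have := card_disagreements_Kof_le pos C_part.
rewrite !card_disagreements //; lia.
Qed.
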